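(* Let $D$ be a simple drawing of $K_n$ with $n\ge 6$ whose rotation system is generalized twisted, and let $(C_1,C_2)$ be a pair of antipodal vi-cells of $D$. Then for every vertex $v$ that lies neither on the boundary of $C_1$ nor on the boundary of $C_2$, there is a pair $(\bar C_1,\bar C_2)$ of antipodal vi-cells of the subdrawing $D\setminus\{v\}$ with $C_1\subseteq \bar C_1$ and $C_2\subseteq \bar C_2$.
   Context: A simple drawing of a graph maps vertices to distinct points of the plane and edges to Jordan arcs joining their endpoints and not passing through other vertices, such that any two edges share at most one point, which is either a common endpoint or a proper crossing. $D\setminus\{v\}$ denotes $D$ with the vertex $v$ and all edges incident to $v$ removed. Cells are the connected components of the complement of the drawing; a vi-cell is a cell with a vertex on its boundary. A triangle is the closed curve formed by three vertices and the three edges between them, dividing the plane into two sides; two cells are antipodal if for every triangle they lie on different sides. The rotation system (clockwise cyclic orders at the vertices) is generalized twisted if it is the rotation system of a simple drawing strongly isomorphic (via a plane homeomorphism) to one with a point $O$ such that every ray from $O$ crosses every edge at most once and some ray from $O$ crosses all edges. *)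

From HB Require Import structures.
From mathcomp Require Import all_boot all_order all_algebra.
From mathcomp Require Import all_classical all_reals all_analysis.
Set Implicit Arguments. Unset Strict Implicit. Unset Printing Implicit Defensive.
Import Order.TTheory GRing.Theory Num.Theory.
Import numFieldNormedType.Exports.
Local Open Scope classical_set_scope.
Local Open Scope ring_scope.

Notation pt R := (R * R)%type (only parsing).
Section Drawings.
Variable R : realType.
Local Notation pt := (R * R)%type (only parsing).

Definition sqdist (p q : pt) : R := (p.1 - q.1) ^+ 2 + (p.2 - q.2) ^+ 2.
Definition det3 (a b c : pt) : R :=
  (b.1 - a.1) * (c.2 - a.2) - (b.2 - a.2) * (c.1 - a.1).

Definition unitI : set R := `[0, 1].

Definition homeo_on (U V : set pt) (h : pt -> pt) : Prop :=
  exists g : pt -> pt,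
    [/\ forall x, U x -> V (h x), forall y, V y -> U (g y),
        forall x, U x -> g (h x) = x, forall y, V y -> h (g y) = y &
        {within U, continuous h} /\ {within V, continuous g}].

Definition plane_homeo (h : pt -> pt) : Prop := homeo_on setT setT h.

(* A drawing of K_n: vertex positions and, for each pair i < j, a
   parametrized arc from vertex i to vertex j (only i < j is used). *)
Record drawing (n : nat) := Drawing {
  dv : 'I_n -> pt;
  de : 'I_n -> 'I_n -> R -> pt }.

Definition edge_img n (D : drawing n) (i j : 'I_n) : set pt :=
  if (i < j)%N then de D i j @` unitI else de D j i @` unitI.

Definition arc_from n (D : drawing n) (v a : 'I_n) : R -> pt :=
  if (v < a)%N then de D v a else fun t => de D a v (1 - t).

Definition sq : set pt := [set z | `|z.1| < 1 /\ `|z.2| < 1].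
Definition haxis : set pt := [set z | sq z /\ z.2 = 0].
Definition vaxis : set pt := [set z | sq z /\ z.1 = 0].

Definition proper_crossing (e f : set pt) (p : pt) : Prop :=
  exists U : set pt, exists h : pt -> pt,
    [/\ open U, U p, homeo_on U sq h, h p = (0, 0) &
        h @` (e `&` U) = haxis /\ h @` (f `&` U) = vaxis].

Definition simple_drawing n (D : drawing n) : Prop :=
  [/\ injective (dv D),
      (forall i j : 'I_n, (i < j)%N ->
         [/\ {within unitI, continuous (de D i j)},
             set_inj unitI (de D i j),
             de D i j 0 = dv D i, de D i j 1 = dv D j &
             forall k, k != i -> k != j -> ~ (de D i j @` unitI) (dv D k)]) &
      (forall i j k l : 'I_n, (i < j)%N -> (k < l)%N -> (i, j) != (k, l) ->
         (forall p q, edge_img D i j p -> edge_img D k l p ->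
                      edge_img D i j q -> edge_img D k l q -> p = q) /\
         (forall p, edge_img D i j p -> edge_img D k l p ->
            (exists m : 'I_n, [/\ m \in [:: i; j], m \in [:: k; l] & p = dv D m])
            \/ proper_crossing (edge_img D i j) (edge_img D k l) p))].

(* The point set of the subdrawing induced on the vertex set S
   (S = setT gives D, S = [set~ v] gives D \ {v}). *)
Definition dset n (D : drawing n) (S : set 'I_n) : set pt :=
  [set p | (exists k, S k /\ p = dv D k) \/
           (exists i j, [/\ S i, S j, i != j & edge_img D i j p])].

Definition is_cell n (D : drawing n) (S : set 'I_n) (C : set pt) : Prop :=
  exists x, ~ dset D S x /\ C = connected_component (~` dset D S) x.

Definition on_boundary (C : set pt) (p : pt) : Prop := closure C p /\ ~ C p.

Definition is_vi_cell n (D : drawing n) (S : set 'I_n) (C : set pt) : Prop :=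
  is_cell D S C /\ exists k, S k /\ on_boundary C (dv D k).

Definition triangle n (D : drawing n) (a b c : 'I_n) : set pt :=
  edge_img D a b `|` edge_img D b c `|` edge_img D a c.

Definition antipodal n (D : drawing n) (S : set 'I_n) (C1 C2 : set pt) : Prop :=
  forall a b c : 'I_n, S a -> S b -> S c -> a != b -> b != c -> a != c ->
    forall x y, C1 x -> C2 y ->
      ~ connected_component (~` triangle D a b c) x y.

Definition first_exit (g : R -> pt) (c : pt) (eps : R) (p : pt) : Prop :=
  exists t, [/\ unitI t, p = g t, sqdist p c = eps ^+ 2 &
     forall s, 0 <= s -> s < t -> sqdist (g s) c < eps ^+ 2].

(* rotation system: at vertex v, the edges to a, b, c leave v in clockwise
   cyclic order (a, b, c), read off on all sufficiently small circles *)
Definition rot_cw n (D : drawing n) (v a b c : 'I_n) : Prop :=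
  exists eps0 : R, 0 < eps0 /\
    forall eps, 0 < eps -> eps < eps0 ->
      forall pa pb pc, first_exit (arc_from D v a) (dv D v) eps pa ->
        first_exit (arc_from D v b) (dv D v) eps pb ->
        first_exit (arc_from D v c) (dv D v) eps pc ->
        det3 pa pb pc < 0.

Definition same_rotation n (D1 D2 : drawing n) : Prop :=
  forall v a b c : 'I_n, [/\ v != a, v != b, v != c & [/\ a != b, b != c & a != c]] ->
    (rot_cw D1 v a b c <-> rot_cw D2 v a b c).

Definition ray (O d : pt) : set pt :=
  [set p | exists t : R, 0 <= t /\ p = (O.1 + t * d.1, O.2 + t * d.2)].

Definition gen_twisted_drawing n (D : drawing n) : Prop :=
  simple_drawing D /\ exists O : pt,
    (forall d : pt, d != (0, 0) -> forall i j : 'I_n, i != j ->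
       forall p q, ray O d p -> edge_img D i j p -> ray O d q -> edge_img D i j q ->
       p = q) /\
    (exists d : pt, d != (0, 0) /\ forall i j : 'I_n, i != j ->
       exists p, ray O d p /\ edge_img D i j p).

Definition map_drawing n (h : pt -> pt) (D : drawing n) : drawing n :=
  Drawing (fun k => h (dv D k)) (fun i j t => h (de D i j t)).

Definition gen_twisted_rotation n (D : drawing n) : Prop :=
  exists (D2 : drawing n) (h : pt -> pt),
    [/\ gen_twisted_drawing D2, plane_homeo h &
        same_rotation D (map_drawing h D2)].

End Drawings.

(* Deleting a vertex only removes points from the drawing, so every cell of D
   lies inside a cell of D \ {v}.  A vertex k <> v on the boundary of C stays on
   the boundary of the larger cell, being a point of the subdrawing, and the
   triangles of D \ {v} are triangles of D whose complements contain the larger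
   cells, so antipodality is inherited. *)
From mathcomp Require Import all_boot all_order all_algebra.
From mathcomp Require Import all_classical all_reals all_analysis.
Set Implicit Arguments. Unset Strict Implicit. Unset Printing Implicit Defensive.
Import numFieldNormedType.Exports.
Local Open Scope classical_set_scope.

Lemma connected_componentS {T : topologicalType} (A B : set T) (x : T) :
  A `<=` B -> connected_component A x `<=` connected_component B x.
Proof.
move=> AB y [C [Cx CA Cc] Cy]; exists C => //; split => //.
exact: subset_trans CA AB.
Qed.

Section Subdrawings.
Variables (R : realType) (n : nat) (D : drawing R n).

Definition cell_of (S : set 'I_n) (x : pt R) : set (pt R) :=
  connected_component (~` dset D S) x.

Lemma dsetS (S S' : set 'I_n) : S `<=` S' -> dset D S `<=` dset D S'.
Proof.
move=> SS' p [[k [Sk ->]]|[i [j [Si Sj ij Eij]]]].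
  by left; exists k; split => //; apply: SS'.
by right; exists i, j; split => //; apply: SS'.
Qed.

Lemma triangle_sub_dset (S : set 'I_n) (a b c : 'I_n) :
  S a -> S b -> S c -> a != b -> b != c -> a != c ->
  triangle D a b c `<=` dset D S.
Proof.
move=> Sa Sb Sc ab bc ac p [[Eab|Ebc]|Eac]; right.
- by exists a, b.
- by exists b, c.
- by exists a, c.
Qed.

Lemma cell_ofS (S S' : set 'I_n) (x : pt R) :
  S `<=` S' -> cell_of S' x `<=` cell_of S x.
Proof.
move=> SS'; apply: connected_componentS => p dS'p dSp.
by apply: dS'p; apply: dsetS SS' _ dSp.
Qed.

Lemma is_vi_cell_of (S S' : set 'I_n) (x : pt R) (k : 'I_n) :
  S `<=` S' -> ~ dset D S' x -> S k -> on_boundary (cell_of S' x) (dv D k) ->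
  is_vi_cell D S (cell_of S x).
Proof.
move=> SS' dS'x Sk [clk _]; split.
  by exists x; split => // dSx; apply: dS'x; apply: dsetS SS' _ dSx.
exists k; split => //; split; first by move: clk; apply: closureS; apply: cell_ofS.
by move=> /connected_component_sub; apply; left; exists k.
Qed.

Lemma antipodal_cell_of (S S' : set 'I_n) (C1 C2 : set (pt R)) (x1 x2 : pt R) :
  S `<=` S' -> antipodal D S' C1 C2 -> C1 x1 -> C2 x2 ->
  antipodal D S (cell_of S x1) (cell_of S x2).
Proof.
move=> SS' antiC C1x1 C2x2 a b c Sa Sb Sc ab bc ac x y x1x x2y xy.
have out_dset_out_tri : ~` dset D S `<=` ~` triangle D a b c.
  by move=> p dSp tp; apply: dSp; apply: triangle_sub_dset Sa Sb Sc ab bc ac _ tp.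
apply: (antiC a b c (SS' _ Sa) (SS' _ Sb) (SS' _ Sc) ab bc ac x1 x2) => //.
apply: (connected_component_trans (connected_componentS out_dset_out_tri x1x)).
apply: (connected_component_trans xy); apply: connected_component_sym.
exact: connected_componentS out_dset_out_tri _ x2y.
Qed.

End Subdrawings.

Theorem lemma25 (R : realType) (n : nat) (D : drawing R n)
  (C1 C2 : set (pt R)) :
  (6 <= n)%N ->
  simple_drawing D ->
  gen_twisted_rotation D ->
  is_vi_cell D setT C1 -> is_vi_cell D setT C2 ->
  antipodal D setT C1 C2 ->
  forall v : 'I_n,
    ~ on_boundary C1 (dv D v) -> ~ on_boundary C2 (dv D v) ->
    exists C1' C2' : set (pt R),
      [/\ is_vi_cell D [set~ v] C1', is_vi_cell D [set~ v] C2',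
          antipodal D [set~ v] C1' C2', C1 `<=` C1' & C2 `<=` C2'].
Proof.
move=> _ _ _ [[x1 [dx1 ->]] [k1 [_ bd1]]] [[x2 [dx2 ->]] [k2 [_ bd2]]] antiC v
  nbd1 nbd2.
have subT : [set~ v] `<=` setT by [].
have k_neq_v k C : on_boundary C (dv D k) -> ~ on_boundary C (dv D v) ->
    [set~ v] k.
  by move=> bdk nbdv kv; apply: nbdv; rewrite -kv.
exists (cell_of D [set~ v] x1), (cell_of D [set~ v] x2); split.
- exact: is_vi_cell_of subT dx1 (k_neq_v _ _ bd1 nbd1) bd1.
- exact: is_vi_cell_of subT dx2 (k_neq_v _ _ bd2 nbd2) bd2.
- apply: antipodal_cell_of subT antiC _ _;
    exact: connected_component_refl.
- exact: cell_ofS.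
- exact: cell_ofS.
Qed.
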